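(* For every state $(S_i)_{i\in\mathbb Z}$ of the box-basket-ball system, the state obtained by the carrier description of $T_\infty$ coincides with the state obtained by the combinatorial description of the time evolution (both as defined in the context).
   Context: Box-basket-ball system (BBBS). A site state is a triple $(a,b,c)$ of nonnegative integers with $a=b-c+1$; it models a site containing one box, $b$ baskets and $c$ balls, where each box or basket holds at most one ball (balls are placed in the box first whenever possible), so $a$ is the number of unoccupied boxes/baskets and $\min(a,b)$ is the number of empty baskets. Write $V=(1,0,0)$ (vacuum). A state is a sequence $(S_i)_{i\in\mathbb Z}$ of site states with $S_i=V$ for all but finitely many $i$. Carrier description of $T_\infty$: a carrier, initially in state $(\infty,0,0)$, passes through the sites from left ($i\to-\infty$) to right; when the carrier in state $(\infty,b,c)$ meets the site $S_i=(d,e,f)$, the site becomes $S_i'=(d',e',f')$ and the carrier becomes $(\infty,b',c')$, where $d'=d+b+f-\min(e+c,d+c,d+b)$, $e'=e+b-\min(d,e)$, $f'=\min(e+c,d+c,d+b)-\min(d,e)$, $b'=\min(d,e)$, $c'=c+f+\min(d,e)-\min(e+c,d+c,d+b)$. The new state is $(S_i')_{i\in\mathbb Z}$. Combinatorial description: first, every empty basket is moved from its site $i$ to site $i+1$ (full baskets are not moved); second, the balls are considered one at a time from left to right, and each ball is moved to the nearest currently unoccupied box or basket located at a site strictly to its right; each ball is moved exactly once. *)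

From Stdlib Require Import ZArith List Sorting.Sorted Arith Lia.
Import ListNotations.
Open Scope Z_scope.

(** Site states (a,b,c) with a = b - c + 1, i.e. a + c = b + 1 in nat. *)
Definition site : Type := (nat * nat * nat)%type.
Definition V : site := (1%nat, 0%nat, 0%nat).
Definition site_a (s : site) : nat := let '(a, _, _) := s in a.
Definition site_b (s : site) : nat := let '(_, b, _) := s in b.
Definition site_c (s : site) : nat := let '(_, _, c) := s in c.
Definition valid_site (s : site) : Prop :=
  let '(a, b, c) := s in (a + c = b + 1)%nat.

Definition state : Type := Z -> site.

Definition is_state (S : state) : Prop :=
  (forall i, valid_site (S i)) /\
  exists N : Z, forall i, N < Z.abs i -> S i = V.

(** One carrier/site interaction: carrier (oo,b,c) meets site (d,e,f). *)
Definition carrier_step (car : nat * nat) (s : site) : site * (nat * nat) :=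
  let '(b, c) := car in
  let '(d, e, f) := s in
  let m := Nat.min (Nat.min (e + c) (d + c)) (d + b) in
  let n := Nat.min d e in
  (((d + b + f - m)%nat, (e + b - n)%nat, (m - n)%nat),
   (n, (c + f + n - m)%nat)).

(** Carrier description of T_oo: the carrier state car i entering site i is
    (oo,0,0) far to the left and is transformed site by site. *)
Definition carrier_evolution (S S' : state) : Prop :=
  exists car : Z -> nat * nat,
    (exists L : Z, forall i, i <= L -> car i = (0%nat, 0%nat)) /\
    (forall i, car (i + 1) = snd (carrier_step (car i) (S i))) /\
    (forall i, S' i = fst (carrier_step (car i) (S i))).

Definition empty_baskets (s : site) : nat := Nat.min (site_a s) (site_b s).

(* baskets at site i after step 1 (empty baskets moved from i to i+1) *)
Definition baskets1 (S : state) (i : Z) : nat :=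
  (site_b (S i) - empty_baskets (S i) + empty_baskets (S (i - 1)%Z))%nat.

(* number of boxes+baskets at site i after step 1 *)
Definition cap1 (S : state) (i : Z) : nat := (baskets1 S i + 1)%nat.

(* Step 2: balls (listed by their original site, left to right) are moved one
   at a time; occ x = number of occupied boxes/baskets at site x. *)
Inductive run (cap : Z -> nat) : (Z -> nat) -> list Z -> (Z -> nat) -> Prop :=
| run_nil : forall occ, run cap occ [] occ
| run_cons : forall occ j k l occ',
    j < k ->
    (occ k < cap k)%nat ->
    (forall m, j < m < k -> (cap m <= occ m)%nat) ->
    run cap (fun x => if Z.eq_dec x k then Datatypes.S (occ x)
                      else if Z.eq_dec x j then pred (occ x) else occ x)
        l occ' ->
    run cap occ (j :: l) occ'.

Definition comb_evolution (S S' : state) : Prop :=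
  exists (balls : list Z) (occ' : Z -> nat),
    Sorted Z.le balls /\
    (forall i, count_occ Z.eq_dec balls i = site_c (S i)) /\
    run (cap1 S) (fun i => site_c (S i)) balls occ' /\
    (forall i, S' i = ((cap1 S i - occ' i)%nat, baskets1 S i, occ' i)).

From Stdlib Require Import ZArith List Sorting.Sorted Arith Lia.
Import ListNotations.
Open Scope Z_scope.

(* What drives both descriptions is the number c_i of balls in transit from site
   i-1 to site i.  Moving the balls one at a time from left to right, the balls
   passing site i are those of sites < i not yet placed; at site i they fill the
   free boxes/baskets (the capacity after the shift of the empty baskets, minus
   the balls of site i, which have not moved yet), and the balls of site i then
   join the remaining ones:
     c_{i+1} = c_i - min(c_i, free_i) + balls_i,   site i ends with min(c_i, free_i) balls.
   By induction on the list of balls, any run of the combinatorial moves ends in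
   this configuration.  The carrier (oo,b,c) entering site i has b = min(a,b) of
   site i-1 (the empty baskets arriving at i) and c = c_i, and the carrier rule
   is exactly this deposit-and-pick-up rule. *)

Lemma Z_upward_ind (P : Z -> Prop) (z : Z) :
  P z -> (forall n, z <= n -> P n -> P (n + 1)) -> forall n, z <= n -> P n.
Proof.
  intros Pz step. apply Z.right_induction; [intros ? ? ->; reflexivity | exact Pz |].
  intros n Hn. rewrite <- Z.add_1_r. auto.
Qed.

Ltac destruct_ifs :=
  repeat match goal with
  | |- context [if ?b then _ else _] => destruct b
  | H : context [if ?b then _ else _] |- _ => destruct b
  end.

Lemma Z_rec_ext {X : Type} (F : Z -> X -> X) (h1 h2 : Z -> X) (L : Z) :
  (forall i, i <= L -> h1 i = h2 i) ->
  (forall i, h1 (i + 1) = F i (h1 i)) -> (forall i, h2 (i + 1) = F i (h2 i)) ->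
  forall i, h1 i = h2 i.
Proof.
  intros Hlow H1 H2 i.
  destruct (Z.le_gt_cases i L); [auto|].
  apply (Z_upward_ind (fun i => h1 i = h2 i) L); [auto with zarith | | lia].
  intros n _ IH. rewrite H1, H2, IH. reflexivity.
Qed.

(* [c x] balls are carried into site [x]; [occ] counts the balls sitting at each
   site before the moves, [cnt] those that still have to leave it. *)
Definition transit (cap occ cnt c : Z -> nat) : Prop :=
  forall x, c (x + 1) = (c x - Nat.min (c x) (cap x - occ x) + cnt x)%nat.

Section Transit.
Variables (cap occ cnt c : Z -> nat).
Hypothesis Hc : transit cap occ cnt c.

Lemma transit_zero_upto B j :
  (forall x, x <= B -> c x = 0%nat) -> (forall x, x < j -> cnt x = 0%nat) ->
  forall x, x <= j -> c x = 0%nat.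
Proof.
  intros HB Hcnt x Hx.
  destruct (Z.le_gt_cases x B); [auto|].
  revert Hx. apply (Z_upward_ind (fun x => x <= j -> c x = 0%nat) B); [auto with zarith | | lia].
  intros n _ IH Hn. rewrite Hc, IH, Hcnt by lia. reflexivity.
Qed.

Lemma transit_pos_upto j k :
  (1 <= c (j + 1))%nat -> (forall m, j < m < k -> (cap m <= occ m)%nat) ->
  forall x, j < x <= k -> (1 <= c x)%nat.
Proof.
  intros Hj Hfull x [Hjx Hxk].
  revert Hxk. apply (Z_upward_ind (fun x => x <= k -> (1 <= c x)%nat) (j + 1)); [auto | | lia].
  intros n Hn IH Hnk. rewrite Hc. specialize (Hfull n). lia.
Qed.

End Transit.

Lemma run_occupancy cap occ l occ' :
  run cap occ l occ' -> Sorted Z.le l ->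
  (forall x, (count_occ Z.eq_dec l x <= occ x)%nat) ->
  forall c B, transit cap occ (count_occ Z.eq_dec l) c -> (forall x, x <= B -> c x = 0%nat) ->
  forall x, occ' x = (occ x - count_occ Z.eq_dec l x + Nat.min (c x) (cap x - occ x))%nat.
Proof.
  induction 1 as [occ | occ j k l occ' Hjk Hk Hfull Hrun IH];
    intros Hsorted Hle c B Hc HB x.
  - rewrite (transit_zero_upto _ _ _ _ Hc B x HB (fun _ _ => eq_refl) x) by lia.
    simpl. lia.
  - apply Sorted_StronglySorted in Hsorted; [|exact Z.le_trans].
    inversion Hsorted as [|? ? Hs Hge]; subst.
    rewrite Forall_forall in Hge.
    assert (Hcj : forall x, x <= j -> c x = 0%nat).
    { apply (transit_zero_upto _ _ _ _ Hc B j HB).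
      intros y Hy. cbn. destruct (Z.eq_dec j y); [lia|].
      apply count_occ_not_In. intros Hin. apply Hge in Hin. lia. }
    assert (Hpos : forall x, j < x <= k -> (1 <= c x)%nat).
    { apply (transit_pos_upto _ _ _ _ Hc); [|exact Hfull].
      rewrite Hc, Hcj by lia. cbn. destruct (Z.eq_dec j j); lia. }
    (* Moving the leftmost ball from [j] to [k] takes it out of transit over (j, k]. *)
    set (c1 := fun x => if Z_lt_dec j x then if Z_le_dec x k then (c x - 1)%nat else c x
                        else c x).
    assert (Hle1 : forall y, (count_occ Z.eq_dec l y <=
        (if Z.eq_dec y k then S (occ y) else if Z.eq_dec y j then pred (occ y) else occ y))%nat).
    { intro y. specialize (Hle y). cbn in Hle. destruct_ifs; subst; lia. }
    rewrite (IH (StronglySorted_Sorted Hs) Hle1 c1 j); cbn.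
    + unfold c1. specialize (Hcj x). specialize (Hpos x). specialize (Hfull x). specialize (Hle x).
      cbn in Hle. destruct_ifs; subst; lia.
    + intro y. unfold c1. rewrite Hc.
      pose proof (Hcj y); pose proof (Hcj (y + 1)); pose proof (Hpos y); pose proof (Hpos (y + 1)).
      specialize (Hfull y). cbn. destruct_ifs; subst; lia.
    + intros y Hy. unfold c1. destruct_ifs; auto with zarith.
Qed.

Lemma first_free_after (P : Z -> Prop) (decP : forall x, {P x} + {~ P x}) (j T : Z) :
  (forall x, T < x -> P x) -> exists k, j < k /\ P k /\ forall m, j < m < k -> ~ P m.
Proof.
  intros HT.
  assert (Hsearch : forall n, j <= n ->
    (exists k, j < k <= n /\ P k /\ forall m, j < m < k -> ~ P m) \/
    (forall m, j < m <= n -> ~ P m)).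
  { apply Z_upward_ind; [right; lia |].
    intros n Hn [(k & Hk & HPk & Hmin) | Hnone]; [left; exists k; auto with zarith |].
    destruct (decP (n + 1)) as [HP | HnP].
    - left. exists (n + 1). repeat split; auto with zarith.
    - right. intros m Hm. destruct (Z.eq_dec m (n + 1)); subst; auto with zarith. }
  destruct (Hsearch (Z.max T j + 1)) as [(k & Hk & HPk & Hmin) | Hnone]; [lia | |].
  - exists k. repeat split; auto; lia.
  - exfalso. apply (Hnone (Z.max T j + 1)); [lia | apply HT; lia].
Qed.

Lemma run_exists (cap : Z -> nat) l : forall occ,
  (exists T, forall x, T < x -> (occ x < cap x)%nat) -> exists occ', run cap occ l occ'.
Proof.
  induction l as [|j l IH]; intros occ [T HT]; [eexists; constructor|].
  destruct (first_free_after (fun x => (occ x < cap x)%nat) (fun x => lt_dec _ _) j T HT)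
    as (k & Hjk & Hk & Hmin).
  edestruct IH as [occ' Hrun]; [| exists occ'; econstructor; eauto].
  - exists (Z.max T k). intros x Hx. destruct_ifs; subst; try lia. apply HT. lia.
  - intros m Hm. apply Hmin in Hm. lia.
Qed.

Fixpoint balls_from (g : Z -> nat) (a : Z) (n : nat) : list Z :=
  match n with
  | O => []
  | S n' => repeat a (g a) ++ balls_from g (a + 1) n'
  end.

Lemma balls_from_lower_bound g n : forall a y, In y (balls_from g a n) -> a <= y.
Proof.
  induction n as [|n IH]; intros a y Hy; cbn in Hy; [contradiction|].
  apply in_app_or in Hy as [Hy | Hy].
  - apply repeat_spec in Hy. lia.
  - apply IH in Hy. lia.
Qed.

Lemma count_balls_from g n : forall a x,
  count_occ Z.eq_dec (balls_from g a n) x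
  = if Z_le_dec a x then if Z_lt_dec x (a + Z.of_nat n) then g x else 0%nat else 0%nat.
Proof.
  induction n as [|n IH]; intros a x; cbn [balls_from].
  - destruct_ifs; reflexivity || lia.
  - rewrite count_occ_app, IH.
    destruct (Z.eq_dec x a) as [-> | Hxa].
    + rewrite count_occ_repeat_eq by reflexivity. destruct_ifs; lia.
    + rewrite count_occ_repeat_neq by auto. destruct_ifs; lia.
Qed.

Lemma Sorted_repeat_app {A : Type} (R : A -> A -> Prop) (a : A) k l :
  (forall x, R x x) -> Sorted R l -> (forall y, In y l -> R a y) ->
  Sorted R (repeat a k ++ l).
Proof.
  intros Rrefl Hl Ha. induction k as [|k IH]; cbn; [exact Hl|].
  constructor; [exact IH|].
  destruct k; cbn.
  - destruct l; constructor. apply Ha. left. reflexivity.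
  - constructor. apply Rrefl.
Qed.

Lemma balls_from_sorted g n : forall a, Sorted Z.le (balls_from g a n).
Proof.
  induction n as [|n IH]; intros a; cbn; [constructor|].
  apply Sorted_repeat_app; [exact Z.le_refl | apply IH |].
  intros y Hy. apply balls_from_lower_bound in Hy. lia.
Qed.

Fixpoint carrier_after (S : state) (L : Z) (n : nat) : nat * nat :=
  match n with
  | O => (0%nat, 0%nat)
  | Datatypes.S n' => snd (carrier_step (carrier_after S L n') (S (L + Z.of_nat n')))
  end.

Definition carrier_from (S : state) (L i : Z) : nat * nat :=
  carrier_after S L (Z.to_nat (i - L)).

Section Carrier.
Variables (S : state) (L : Z).
Hypothesis HV : forall i, i < L -> S i = V.

Lemma carrier_from_low i : i <= L -> carrier_from S L i = (0%nat, 0%nat).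
Proof. intros Hi. unfold carrier_from. replace (Z.to_nat (i - L)) with 0%nat by lia. reflexivity. Qed.

Lemma carrier_from_succ i :
  carrier_from S L (i + 1) = snd (carrier_step (carrier_from S L i) (S i)).
Proof.
  destruct (Z_lt_le_dec i L) as [Hi | Hi].
  - rewrite !carrier_from_low, HV by lia. reflexivity.
  - unfold carrier_from.
    replace (Z.to_nat (i + 1 - L)) with (Datatypes.S (Z.to_nat (i - L))) by lia.
    cbn. replace (L + Z.of_nat (Z.to_nat (i - L))) with i by lia. reflexivity.
Qed.

Lemma carrier_evolution_iff S' :
  carrier_evolution S S' <-> forall i, S' i = fst (carrier_step (carrier_from S L i) (S i)).
Proof.
  split.
  - intros (car & [L' Hlow] & Hrec & HS') i. rewrite HS'.
    rewrite (Z_rec_ext (fun i c => snd (carrier_step c (S i))) car (carrier_from S L) (Z.min L L'));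
      auto using carrier_from_succ.
    intros j Hj. rewrite Hlow, carrier_from_low by lia. reflexivity.
  - intros HS'. exists (carrier_from S L). repeat split; auto using carrier_from_succ.
    exists L. exact carrier_from_low.
Qed.

Lemma carrier_from_fst i : fst (carrier_from S L i) = empty_baskets (S (i - 1)).
Proof.
  replace i with (i - 1 + 1) at 1 by lia. rewrite carrier_from_succ.
  destruct (carrier_from S L (i - 1)), (S (i - 1)) as [[d e] f]. reflexivity.
Qed.

Lemma carrier_step_fills_free_slots i : valid_site (S i) ->
  let c := snd (carrier_from S L i) in
  let dep := Nat.min c (cap1 S i - site_c (S i)) in
  carrier_step (carrier_from S L i) (S i)
  = ((cap1 S i - dep, baskets1 S i, dep)%nat,
     (empty_baskets (S i), c - dep + site_c (S i))%nat).
Proof.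
  intros Hvalid c dep. subst c dep. unfold cap1, baskets1.
  rewrite <- carrier_from_fst.
  destruct (carrier_from S L i) as [b c], (S i) as [[d e] f].
  unfold valid_site, empty_baskets, site_a, site_b, site_c in *. cbn.
  f_equal; [f_equal; [f_equal|] | f_equal]; lia.
Qed.

End Carrier.

Lemma run_matches_carrier S L balls occ' :
  (forall i, valid_site (S i)) -> (forall i, i < L -> S i = V) ->
  Sorted Z.le balls -> (forall i, count_occ Z.eq_dec balls i = site_c (S i)) ->
  run (cap1 S) (fun i => site_c (S i)) balls occ' ->
  forall i, ((cap1 S i - occ' i)%nat, baskets1 S i, occ' i)
            = fst (carrier_step (carrier_from S L i) (S i)).
Proof.
  intros Hvalid HV Hsorted Hcount Hrun i.
  assert (Htransit : transit (cap1 S) (fun i => site_c (S i)) (count_occ Z.eq_dec balls)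
                             (fun i => snd (carrier_from S L i))).
  { intro x. rewrite carrier_from_succ, carrier_step_fills_free_slots, Hcount by auto.
    reflexivity. }
  rewrite (run_occupancy _ _ _ _ Hrun Hsorted ltac:(intro; rewrite Hcount; lia) _ L Htransit)
    by (intros; rewrite carrier_from_low; auto).
  rewrite carrier_step_fills_free_slots, Hcount by auto. cbn.
  rewrite Nat.sub_diag. reflexivity.
Qed.

Theorem mainTheorem2 (S : state) :
  is_state S ->
  (exists S' : state, carrier_evolution S S') /\
  (forall S' : state, carrier_evolution S S' <-> comb_evolution S S').
Proof.
  intros [Hvalid [N HN]].
  set (L := - Z.abs N).
  assert (HV : forall i, i < L -> S i = V) by (intros; apply HN; lia).
  split.
  - exists (fun i => fst (carrier_step (carrier_from S L i) (S i))).
    rewrite carrier_evolution_iff by exact HV. reflexivity.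
  - intros S'. rewrite carrier_evolution_iff by exact HV. split.
    + intros HS'.
      set (balls := balls_from (fun i => site_c (S i)) L (Z.to_nat (2 * Z.abs N + 1))).
      assert (Hcount : forall i, count_occ Z.eq_dec balls i = site_c (S i)).
      { intro i. unfold balls. rewrite count_balls_from.
        destruct_ifs; auto; rewrite HN by lia; reflexivity. }
      destruct (run_exists (cap1 S) balls (fun i => site_c (S i))) as [occ' Hrun].
      { exists (Z.abs N). intros x Hx. rewrite HN by lia. unfold cap1. cbn. lia. }
      assert (Hsorted : Sorted Z.le balls) by apply balls_from_sorted.
      exists balls, occ'. refine (conj Hsorted (conj Hcount (conj Hrun _))).
      intro i. rewrite HS'. symmetry. apply (run_matches_carrier S L balls); auto.
    + intros (balls & occ' & Hsorted & Hcount & Hrun & HS') i. rewrite HS'.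
      apply (run_matches_carrier S L balls); auto.
Qed.
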